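(* Let $p$ be a complex polynomial and $c\in\mathbb C\setminus\{0\}$. (i) If there exists $\alpha\in\mathbb C$ with $|\alpha|<1$, $\alpha p'(\alpha)+cp(\alpha)=0$ and $|p(\alpha)-1|<1$, then $\mathrm D(p,c)\neq\{0\}$ and $\big[N,-\frac ic\log p(L)\big]=-i\mathbf 1$ on $\mathrm D(p,c)$. (ii) If $p$ is not of the form $p(x)=bx^m$ with $b\in\mathbb C$, $m\in\mathbb N$, then any subspace $\mathcal D\subset \mathcal E\cap\mathrm D(N\log p(L))\cap\mathrm D(\log p(L)N)$ such that $[N,\log p(L)]\varphi=c\varphi$ for all $\varphi\in\mathcal D$ is finite-dimensional, where $\mathcal E$ is the set of $\varphi\in\ell^2$ for which $\sum_{k=1}^\infty\frac1kN(\mathbf1-p(L))^k\varphi$ converges.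
   Context: $\ell^2=\ell^2(\mathbb N)$, $\mathbb N=\{0,1,\dots\}$, basis $(\xi_n)$; $N\xi_n=n\xi_n$ (self-adjoint, maximal domain); $L$ is the left shift $L\xi_n=\xi_{n-1}$, $L\xi_0=0$; $p(L)$ is the bounded operator obtained by substituting $L$ into $p$. For a linear operator $A$, $\mathrm D(\log A)=\{f\in\bigcap_{k\ge0}\mathrm D(A^k):\lim_K\sum_{k=1}^K\frac1k(\mathbf1-A)^kf\text{ exists}\}$, $\log Af=-\sum_{k\ge1}\frac1k(\mathbf1-A)^kf$. $\mathrm D(p,c)$ is the linear hull of all $\varphi\in\mathrm D(N)$ for which there is $\alpha\in\mathbb C$ with $|p(\alpha)-1|<1$, $\alpha p'(\alpha)+cp(\alpha)=0$ and $\varphi\in\ker(L-\alpha\mathbf1)$. Commutators $[A,B]=AB-BA$ on $\mathrm D(AB)\cap\mathrm D(BA)$; ''$[A,B]=C$ on $\mathcal D$'' means $\mathcal D\subset \mathrm D(AB)\cap\mathrm D(BA)$ and $(AB-BA)\varphi=C\varphi$ on $\mathcal D$. *)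

From Stdlib Require Import Reals List ClassicalEpsilon.
From Coquelicot Require Import Coquelicot.
Open Scope C_scope.

(* Vectors: complex sequences indexed by N = {0,1,...}; coordinate n is the
   coefficient on the basis vector xi_n. *)
Definition vec := nat -> C.
Definition vzero : vec := fun _ => 0.
Definition vadd (f g : vec) : vec := fun n => f n + g n.
Definition vsub (f g : vec) : vec := fun n => f n - g n.
Definition vscal (a : C) (f : vec) : vec := fun n => a * f n.

Definition in_l2 (f : vec) : Prop :=
  ex_series (fun n => (Cmod (f n) ^ 2)%R).
Definition dist2 (f g : vec) : R := Series (fun n => (Cmod (f n - g n) ^ 2)%R).
Definition l2_cvg (u : nat -> vec) (v : vec) : Prop :=
  in_l2 v /\ (forall K, in_l2 (u K)) /\ is_lim_seq (fun K => dist2 (u K) v) 0%R.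
Definition lim_l2 (u : nat -> vec) : vec :=
  epsilon (inhabits vzero) (fun v => l2_cvg u v).

Fixpoint vsum1 (F : nat -> vec) (K : nat) : vec :=
  match K with
  | O => vzero
  | S K' => vadd (vsum1 F K') (F K)
  end.

Record op := Op { dom : vec -> Prop ; app : vec -> vec }.

Definition Iop : op := Op in_l2 (fun f => f).
Definition Nop : op :=
  Op (fun f => in_l2 f /\ in_l2 (fun n => RtoC (INR n) * f n))
     (fun f n => RtoC (INR n) * f n).
(* left shift L xi_n = xi_{n-1}, L xi_0 = 0, i.e. (L f)_n = f_{n+1} *)
Definition Lop : op := Op in_l2 (fun f n => f (S n)).

Definition ocomp (A B : op) : op :=
  Op (fun f => dom B f /\ dom A (app B f)) (fun f => app A (app B f)).
Definition osub (A B : op) : op :=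
  Op (fun f => dom A f /\ dom B f) (fun f => vsub (app A f) (app B f)).
Definition oscal (a : C) (A : op) : op := Op (dom A) (fun f => vscal a (app A f)).
Fixpoint opow (A : op) (k : nat) : op :=
  match k with O => Iop | S k' => ocomp A (opow A k') end.

(* Complex polynomials as coefficient lists [a_0; a_1; ...; a_d]. *)
Definition cpoly := list C.
Fixpoint peval (p : cpoly) (x : C) : C :=
  match p with nil => 0 | a :: q => a + x * peval q x end.
(* value of the derivative p' at x *)
Fixpoint pdeval (p : cpoly) (x : C) : C :=
  match p with nil => 0 | a :: q => peval q x + x * pdeval q x end.
(* p(L) : the bounded operator a_0 + a_1 L + ... + a_d L^d (Horner form) *)
Fixpoint pL_app (p : cpoly) (f : vec) : vec :=
  match p with
  | nil => vzero
  | a :: q => let g := pL_app q f in vadd (vscal a f) (fun n => g (S n))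
  end.
Definition pLop (p : cpoly) : op := Op in_l2 (pL_app p).

Definition log_psum (A : op) (f : vec) (K : nat) : vec :=
  vsum1 (fun k => vscal (RtoC (/ INR k)) (app (opow (osub Iop A) k) f)) K.
Definition logop (A : op) : op :=
  Op (fun f => (forall k, dom (opow A k) f) /\ exists v, l2_cvg (log_psum A f) v)
     (fun f => vscal (-1) (lim_l2 (log_psum A f))).

Definition comm_on (A B C : op) (D : vec -> Prop) : Prop :=
  forall f, D f ->
    dom (ocomp A B) f /\ dom (ocomp B A) f /\
    vsub (app (ocomp A B) f) (app (ocomp B A) f) = app C f.

Fixpoint lincomb (l : list (C * vec)) : vec :=
  match l with nil => vzero | (a, g) :: l' => vadd (vscal a g) (lincomb l') end.
Definition span (S : vec -> Prop) : vec -> Prop :=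
  fun f => exists l : list (C * vec), List.Forall (fun x => S (snd x)) l /\ f = lincomb l.

Definition Dpc (p : cpoly) (c : C) : vec -> Prop :=
  span (fun phi => dom Nop phi /\ exists alpha : C,
          (Cmod (peval p alpha - 1) < 1)%R /\
          alpha * pdeval p alpha + c * peval p alpha = 0 /\
          dom Lop phi /\ app Lop phi = vscal alpha phi).

Definition Eset (p : cpoly) : vec -> Prop :=
  fun phi => in_l2 phi /\
    (forall k, dom Nop (app (opow (osub Iop (pLop p)) k) phi)) /\
    exists v, l2_cvg
      (vsum1 (fun k => vscal (RtoC (/ INR k))
                         (app Nop (app (opow (osub Iop (pLop p)) k) phi)))) v.

Definition is_subspace (D : vec -> Prop) : Prop :=
  D vzero /\ (forall f g, D f -> D g -> D (vadd f g)) /\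
  (forall a f, D f -> D (vscal a f)).
Definition finite_dim (D : vec -> Prop) : Prop :=
  exists l : list vec, forall f, D f -> span (fun g => In g l) f.

(* Write T = 1 - p(L), so that log p(L) = - sum_k T^k / k.  Everything rests on
   the commutation relation p(L) N = N p(L) + L p'(L), which gives
   T^k N = N T^k - k T^(k-1) L p'(L); hence the partial sums of
   log p(L) N phi - N log p(L) phi are the geometric sums
   sum_(k < K) T^k L p'(L) phi, and [N, log p(L)] phi is minus their limit.

   (i) On an eigenvector L phi = alpha phi all these operators are scalars: T acts
   by z = 1 - p(alpha), and the geometric sums tend to alpha p'(alpha) / p(alpha) phi
   = - c phi.  The vector (alpha^n)_n is such an eigenvector in D(N) when |alpha| < 1.

   (ii) Conversely, if [N, log p(L)] phi = c phi, the geometric sums converge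
   coordinatewise to - c phi; p(L) telescopes them and acts continuously on each
   coordinate, so L p'(L) phi + c p(L) phi = 0.  This is a linear recurrence with
   characteristic polynomial x p'(x) + c p(x) = sum_j (c + j) a_j x^j, which is
   nonzero unless p is a monomial, so phi is determined by finitely many of its
   coordinates. *)

From Pilot Require Import Defs.
From Stdlib Require Import Reals List Lra Lia FunctionalExtensionality Classical.
From Coquelicot Require Import Coquelicot.
Open Scope C_scope.

Lemma vec_ext (f g : vec) : (forall n, f n = g n) -> f = g.
Proof. intros; apply functional_extensionality; auto. Qed.

Lemma Cmult_integral (x y : C) : x * y = 0 -> x = 0 \/ y = 0.
Proof.
  intros H; destruct (classic (x = 0)) as [|Hx]; auto.
  destruct (classic (y = 0)) as [|Hy]; auto.
  exfalso; exact (Cmult_neq_0 x y Hx Hy H).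
Qed.

Lemma Cmod_lin_sq_le (a b x y : C) :
  (Cmod (a * x + b * y) ^ 2
   <= 2 * (Cmod a ^ 2 * Cmod x ^ 2) + 2 * (Cmod b ^ 2 * Cmod y ^ 2))%R.
Proof.
  pose proof (Cmod_triangle (a * x) (b * y)) as Htri; rewrite !Cmod_mult in Htri.
  pose proof (Cmod_ge_0 (a * x + b * y)).
  assert (0 <= Cmod a * Cmod x)%R by (apply Rmult_le_pos; apply Cmod_ge_0).
  assert (0 <= Cmod b * Cmod y)%R by (apply Rmult_le_pos; apply Cmod_ge_0).
  set (u := (Cmod a * Cmod x)%R) in *; set (v := (Cmod b * Cmod y)%R) in *.
  replace (Cmod a ^ 2 * Cmod x ^ 2)%R with (u ^ 2)%R by (unfold u; ring).
  replace (Cmod b ^ 2 * Cmod y ^ 2)%R with (v ^ 2)%R by (unfold v; ring).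
  assert (Cmod (a * x + b * y) ^ 2 <= (u + v) ^ 2)%R by (apply pow_incr; auto).
  pose proof (pow2_ge_0 (u - v)); simpl in *; nra.
Qed.

Lemma in_l2_lin (a b : C) (f g : vec) :
  in_l2 f -> in_l2 g -> in_l2 (fun n => a * f n + b * g n).
Proof.
  intros Hf Hg.
  apply (@ex_series_le R_AbsRing R_CompleteNormedModule _
           (fun n => 2 * (Cmod a ^ 2 * Cmod (f n) ^ 2) + 2 * (Cmod b ^ 2 * Cmod (g n) ^ 2))%R).
  - intros n; change norm with Rabs.
    rewrite Rabs_pos_eq by apply pow2_ge_0; apply Cmod_lin_sq_le.
  - apply (ex_series_plus (V := R_NormedModule));
      do 2 apply (ex_series_scal_l (V := R_NormedModule)); assumption.
Qed.

Lemma in_l2_ext (f g : vec) : (forall n, f n = g n) -> in_l2 f -> in_l2 g.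
Proof. intros H; rewrite (vec_ext f g H); auto. Qed.

Lemma in_l2_add (f g : vec) : in_l2 f -> in_l2 g -> in_l2 (vadd f g).
Proof.
  intros; apply (in_l2_ext (fun n => 1 * f n + 1 * g n)); [intros; unfold vadd; ring|].
  apply in_l2_lin; auto.
Qed.

Lemma in_l2_sub (f g : vec) : in_l2 f -> in_l2 g -> in_l2 (vsub f g).
Proof.
  intros; apply (in_l2_ext (fun n => 1 * f n + (-1) * g n)); [intros; unfold vsub; ring|].
  apply in_l2_lin; auto.
Qed.

Lemma in_l2_scal (a : C) (f : vec) : in_l2 f -> in_l2 (vscal a f).
Proof.
  intros; apply (in_l2_ext (fun n => a * f n + 0 * f n)); [intros; unfold vscal; ring|].
  apply in_l2_lin; auto.
Qed.

Lemma in_l2_zero : in_l2 vzero.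
Proof.
  apply (ex_series_ext (fun n => scal 0%R ((/ 2) ^ n)%R)).
  - intros n; unfold vzero; rewrite Cmod_0; change scal with Rmult; simpl; ring.
  - apply (ex_series_scal_l (V := R_NormedModule)), ex_series_geom.
    rewrite Rabs_pos_eq; lra.
Qed.

Lemma in_l2_shift (f : vec) : in_l2 f -> in_l2 (fun n => f (S n)).
Proof. intros H; exact (proj1 (ex_series_incr_1 (fun n => Cmod (f n) ^ 2)%R) H). Qed.

Lemma Series_ge_0 (a : nat -> R) :
  (forall n, 0 <= a n)%R -> ex_series a -> (0 <= Series a)%R.
Proof.
  intros Ha Ex.
  replace 0%R with (Series (fun n => 0 * a n)%R) by (rewrite Series_scal_l; ring).
  apply Series_le; auto.
  intros n; rewrite Rmult_0_l; split; [lra | apply Ha].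
Qed.

Lemma Series_ge_term (a : nat -> R) (N : nat) :
  (forall n, 0 <= a n)%R -> ex_series a -> (a N <= Series a)%R.
Proof.
  intros Ha Ex; rewrite (Series_incr_n a (S N)) by (auto; lia).
  assert (0 <= Series (fun k => a (S N + k)%nat))%R.
  { apply Series_ge_0; auto. exact (proj1 (ex_series_incr_n a (S N)) Ex). }
  simpl Init.Nat.pred; destruct N as [|N]; simpl sum_f_R0; [lra|].
  pose proof (cond_pos_sum a N Ha); lra.
Qed.

(* Convergence of complex sequences, phrased with the squared modulus so that
   it compares directly with [dist2]. *)
Definition cvg_C (x : nat -> C) (a : C) : Prop :=
  is_lim_seq (fun K => Cmod (x K - a) ^ 2)%R 0%R.

Lemma cvg_C_ext (x y : nat -> C) (a : C) :
  (forall K, x K = y K) -> cvg_C x a -> cvg_C y a.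
Proof. intros H; apply is_lim_seq_ext; intros K; rewrite H; auto. Qed.

Lemma cvg_C_lin (u v : C) (x y : nat -> C) (a b z : C) :
  cvg_C x a -> cvg_C y b -> u * a + v * b = z ->
  cvg_C (fun K => u * x K + v * y K) z.
Proof.
  intros Hx Hy <-.
  apply (is_lim_seq_le_le (fun _ => 0%R) _
    (fun K => 2 * (Cmod u ^ 2 * Cmod (x K - a) ^ 2) + 2 * (Cmod v ^ 2 * Cmod (y K - b) ^ 2))%R).
  - intros K; split; [apply pow2_ge_0|].
    replace (u * x K + v * y K - (u * a + v * b)) with (u * (x K - a) + v * (y K - b)) by ring.
    apply Cmod_lin_sq_le.
  - apply is_lim_seq_const.
  - replace (Finite 0) with (Finite (2 * (Cmod u ^ 2 * 0) + 2 * (Cmod v ^ 2 * 0))%R)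
      by (f_equal; ring).
    apply is_lim_seq_plus'; apply is_lim_seq_mult'; try apply is_lim_seq_const;
      apply is_lim_seq_mult'; auto; apply is_lim_seq_const.
Qed.

Lemma cvg_C_const (a : C) : cvg_C (fun _ => a) a.
Proof.
  apply (is_lim_seq_ext (fun _ => 0%R)); [|apply is_lim_seq_const].
  intros; replace (a - a) with (RtoC 0) by ring; rewrite Cmod_0; simpl; ring.
Qed.

Lemma cvg_C_shift (x : nat -> C) (a : C) : cvg_C (fun K => x (S K)) a <-> cvg_C x a.
Proof. symmetry; exact (is_lim_seq_incr_1 (fun K => Cmod (x K - a) ^ 2)%R 0%R). Qed.

Lemma cvg_C_unique (x : nat -> C) (a b : C) : cvg_C x a -> cvg_C x b -> a = b.
Proof.
  intros Ha Hb.
  assert (H0 : cvg_C (fun _ => 0) (a - b)).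
  { apply (cvg_C_ext (fun K => 1 * x K + (-1) * x K)); [intros; ring|].
    apply (cvg_C_lin 1 (-1) x x a b); auto; ring. }
  apply is_lim_seq_unique in H0; rewrite Lim_seq_const in H0.
  injection H0; intros E.
  assert (Cmod (0 - (a - b)) = 0%R) as Hmod by (pose proof (Cmod_ge_0 (0 - (a - b))); nra).
  apply Cmod_eq_0 in Hmod.
  replace a with (b - (0 - (a - b))) by ring; rewrite Hmod; ring.
Qed.

Lemma cvg_C_of_filterlim (x : nat -> C) (a : C) :
  filterlim x eventually (locally a) -> cvg_C x a.
Proof.
  intros Hx.
  pose proof (proj1 (@filterlim_locally_ball_norm C_AbsRing nat C_NormedModule
                       eventually _ x a) Hx) as Hball; clear Hx.
  apply is_lim_seq_spec; intros eps.
  assert (Hd : (0 < Rmin eps 1)%R) by (apply Rmin_pos; [apply cond_pos | lra]).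
  destruct (Hball (mkposreal _ Hd)) as [N HN]; exists N; intros n Hn.
  specialize (HN n Hn); unfold ball_norm in HN; simpl in HN.
  change (norm (minus (x n) a)) with (Cmod (x n - a)) in HN.
  pose proof (Cmod_ge_0 (x n - a)); pose proof (Rmin_r eps 1); pose proof (Rmin_l eps 1).
  rewrite Rminus_0_r, Rabs_pos_eq by apply pow2_ge_0.
  simpl; nra.
Qed.

Lemma cvg_C_pow (z : C) : (Cmod z < 1)%R -> cvg_C (fun K => Cpow z K) 0.
Proof.
  intros Hz.
  apply (is_lim_seq_ext (fun K => Cmod z ^ K * (Cmod z ^ K * 1))%R).
  { intros K; replace (Cpow z K - 0) with (Cpow z K) by ring; rewrite Cmod_pow; simpl; ring. }
  assert (G : is_lim_seq (fun K => Cmod z ^ K)%R 0%R).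
  { apply is_lim_seq_geom; rewrite Rabs_pos_eq; auto; apply Cmod_ge_0. }
  replace (Finite 0) with (Finite (0 * (0 * 1))%R) by (f_equal; ring).
  apply is_lim_seq_mult'; auto; apply is_lim_seq_mult'; auto; apply is_lim_seq_const.
Qed.

Lemma l2_cvg_coord (u : nat -> vec) (v : vec) :
  l2_cvg u v -> forall n, cvg_C (fun K => u K n) (v n).
Proof.
  intros [Hv [Hu Hd]] n.
  apply (is_lim_seq_le_le (fun _ => 0%R) _ (fun K => dist2 (u K) v)); auto.
  - intros K; split; [apply pow2_ge_0|].
    apply (Series_ge_term (fun n => Cmod (u K n - v n) ^ 2)%R n);
      [intros; apply pow2_ge_0 | exact (in_l2_sub (u K) v (Hu K) Hv)].
  - apply is_lim_seq_const.
Qed.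

Lemma lim_l2_eq (u : nat -> vec) (v : vec) : l2_cvg u v -> lim_l2 u = v.
Proof.
  intros H.
  assert (H' : l2_cvg u (lim_l2 u)) by (unfold lim_l2; apply ClassicalEpsilon.epsilon_spec; eauto).
  apply vec_ext; intros n.
  apply (cvg_C_unique (fun K => u K n)); apply l2_cvg_coord; auto.
Qed.

Lemma l2_cvg_lin (a b : C) (u u' : nat -> vec) (v v' : vec) :
  l2_cvg u v -> l2_cvg u' v' ->
  l2_cvg (fun K n => a * u K n + b * u' K n) (fun n => a * v n + b * v' n).
Proof.
  intros [Hv [Hu Hd]] [Hv' [Hu' Hd']].
  assert (Hdiff : forall K, ex_series (fun n => Cmod (u K n - v n) ^ 2)%R /\
                            ex_series (fun n => Cmod (u' K n - v' n) ^ 2)%R)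
    by (intros K; split; apply in_l2_sub; auto).
  split; [|split]; [apply in_l2_lin; auto | intros K; apply in_l2_lin; auto |].
  apply (is_lim_seq_le_le (fun _ => 0%R) _
    (fun K => 2 * (Cmod a ^ 2 * dist2 (u K) v) + 2 * (Cmod b ^ 2 * dist2 (u' K) v'))%R).
  - intros K; destruct (Hdiff K) as [E E']; unfold dist2; split.
    + apply Series_ge_0; [intros; apply pow2_ge_0|].
      apply (in_l2_sub (fun n => a * u K n + b * u' K n) (fun n => a * v n + b * v' n));
        apply in_l2_lin; auto.
    + rewrite <- !Series_scal_l, <- Series_plus
        by (do 2 apply (ex_series_scal_l (V := R_NormedModule)); auto).
      apply Series_le.
      * intros n; split; [apply pow2_ge_0|].
        replace (a * u K n + b * u' K n - (a * v n + b * v' n))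
          with (a * (u K n - v n) + b * (u' K n - v' n)) by ring.
        apply Cmod_lin_sq_le.
      * apply (ex_series_plus (V := R_NormedModule));
          do 2 apply (ex_series_scal_l (V := R_NormedModule)); auto.
  - apply is_lim_seq_const.
  - replace (Finite 0) with (Finite (2 * (Cmod a ^ 2 * 0) + 2 * (Cmod b ^ 2 * 0))%R)
      by (f_equal; ring).
    apply is_lim_seq_plus'; apply is_lim_seq_mult'; try apply is_lim_seq_const;
      apply is_lim_seq_mult'; auto; apply is_lim_seq_const.
Qed.

Lemma l2_cvg_scal (s : nat -> C) (a : C) (phi : vec) :
  in_l2 phi -> cvg_C s a -> l2_cvg (fun K => vscal (s K) phi) (vscal a phi).
Proof.
  intros Hphi Hs; split; [|split]; [apply in_l2_scal; auto | intros; apply in_l2_scal; auto |].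
  unfold dist2, vscal.
  apply (is_lim_seq_ext (fun K => Cmod (s K - a) ^ 2 * Series (fun n => Cmod (phi n) ^ 2))%R).
  - intros K; rewrite <- Series_scal_l; apply Series_ext; intros n.
    replace (s K * phi n - a * phi n) with ((s K - a) * phi n) by ring.
    rewrite Cmod_mult; ring.
  - replace (Finite 0) with (Finite (0 * Series (fun n => Cmod (phi n) ^ 2))%R) by (f_equal; ring).
    apply is_lim_seq_mult'; auto; apply is_lim_seq_const.
Qed.

Definition Nv (f : vec) : vec := fun n => RtoC (INR n) * f n.

Lemma Nv_lin (x y : C) (f g : vec) :
  Nv (fun m => x * f m + y * g m) = fun m => x * Nv f m + y * Nv g m.
Proof. apply vec_ext; intros; unfold Nv; ring. Qed.

Lemma pL_app_cons (a : C) (q : cpoly) (f : vec) (n : nat) :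
  pL_app (a :: q) f n = a * f n + pL_app q f (S n).
Proof. reflexivity. Qed.

Lemma pL_app_lin (p : cpoly) (a b : C) (f g : vec) (n : nat) :
  pL_app p (fun m => a * f m + b * g m) n = a * pL_app p f n + b * pL_app p g n.
Proof.
  revert n; induction p as [|x q IH]; intros n; simpl; unfold vzero, vadd, vscal; [ring|].
  rewrite IH; ring.
Qed.

Lemma pL_app_ext (p : cpoly) (f g : vec) : (forall n, f n = g n) -> pL_app p f = pL_app p g.
Proof. intros H; rewrite (vec_ext f g H); auto. Qed.

Lemma pL_app_shift (p : cpoly) (f : vec) (n : nat) :
  pL_app p (fun m => f (S m)) n = pL_app p f (S n).
Proof.
  revert n; induction p as [|x q IH]; intros n; simpl; unfold vadd, vscal; auto.
  rewrite IH; auto.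
Qed.

Lemma pL_app_zero (p : cpoly) (n : nat) : pL_app p vzero n = 0.
Proof.
  revert n; induction p as [|x q IH]; intros n; simpl; unfold vzero, vadd, vscal in *; auto.
  rewrite IH; ring.
Qed.

Lemma in_l2_pL_app (p : cpoly) (f : vec) : in_l2 f -> in_l2 (pL_app p f).
Proof.
  intros H; induction p as [|a q IH]; simpl; [apply in_l2_zero|].
  apply in_l2_add; [apply in_l2_scal | apply in_l2_shift]; auto.
Qed.

Lemma pL_app_comm (p q : cpoly) (f : vec) (n : nat) :
  pL_app p (pL_app q f) n = pL_app q (pL_app p f) n.
Proof.
  revert n; induction p as [|x p' IH]; intros n; [simpl; rewrite pL_app_zero; reflexivity|].
  rewrite pL_app_cons, IH.
  rewrite (pL_app_ext q (pL_app (x :: p') f)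
             (fun m => x * f m + 1 * (fun k => pL_app p' f (S k)) m))
    by (intros; simpl; unfold vadd, vscal; ring).
  rewrite pL_app_lin, pL_app_shift; ring.
Qed.

(* [dpL_app p] is the operator L p'(L); [pL_app_N] shows that it is the
   commutator p(L) N - N p(L). *)
Fixpoint dpL_app (p : cpoly) (f : vec) : vec :=
  match p with
  | nil => vzero
  | _ :: q => fun n => pL_app q f (S n) + dpL_app q f (S n)
  end.

Lemma dpL_app_lin (p : cpoly) (a b : C) (f g : vec) (n : nat) :
  dpL_app p (fun m => a * f m + b * g m) n = a * dpL_app p f n + b * dpL_app p g n.
Proof.
  revert n; induction p as [|x q IH]; intros n; simpl; [unfold vzero; ring|].
  rewrite IH, pL_app_lin; ring.
Qed.

Lemma dpL_app_ext (p : cpoly) (f g : vec) : (forall n, f n = g n) -> dpL_app p f = dpL_app p g.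
Proof. intros H; rewrite (vec_ext f g H); auto. Qed.

Lemma dpL_app_pL (p q : cpoly) (f : vec) (n : nat) :
  dpL_app p (pL_app q f) n = pL_app q (dpL_app p f) n.
Proof.
  revert n; induction p as [|x p' IH]; intros n; simpl; [rewrite pL_app_zero; reflexivity|].
  rewrite IH, pL_app_comm.
  rewrite (pL_app_ext q (fun m => pL_app p' f (S m) + dpL_app p' f (S m))
             (fun m => 1 * (fun k => pL_app p' f (S k)) m + 1 * (fun k => dpL_app p' f (S k)) m))
    by (intros; ring).
  rewrite pL_app_lin, !pL_app_shift; ring.
Qed.

Lemma pL_app_N (p : cpoly) (f : vec) (n : nat) :
  pL_app p (Nv f) n = RtoC (INR n) * pL_app p f n + dpL_app p f n.
Proof.
  revert n; induction p as [|x q IH]; intros n; simpl; unfold vzero, vadd, vscal, Nv in *; [ring|].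
  rewrite IH, S_INR, RtoC_plus; ring.
Qed.

Definition T_app (p : cpoly) (f : vec) : vec := vsub f (pL_app p f).

Fixpoint T_pow (p : cpoly) (k : nat) (f : vec) : vec :=
  match k with O => f | S k' => T_app p (T_pow p k' f) end.

Lemma app_opow_T (p : cpoly) (k : nat) (f : vec) :
  Defs.app (opow (osub Iop (pLop p)) k) f = T_pow p k f.
Proof. induction k as [|k IH]; simpl; [|rewrite IH]; reflexivity. Qed.

Lemma T_app_lin (p : cpoly) (a b : C) (f g : vec) (n : nat) :
  T_app p (fun m => a * f m + b * g m) n = a * T_app p f n + b * T_app p g n.
Proof. unfold T_app, vsub; rewrite pL_app_lin; ring. Qed.

Lemma T_pow_lin (p : cpoly) (k : nat) (a b : C) (f g : vec) (n : nat) :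
  T_pow p k (fun m => a * f m + b * g m) n = a * T_pow p k f n + b * T_pow p k g n.
Proof.
  revert n; induction k as [|k IH]; intros n; simpl; auto.
  rewrite (vec_ext _ (fun m => a * T_pow p k f m + b * T_pow p k g m) IH).
  apply T_app_lin.
Qed.

Lemma dpL_T_pow (p : cpoly) (k : nat) (f : vec) (n : nat) :
  dpL_app p (T_pow p k f) n = T_pow p k (dpL_app p f) n.
Proof.
  revert n; induction k as [|k IH]; intros n; simpl; auto.
  unfold T_app, vsub.
  rewrite (dpL_app_ext p _ (fun m => 1 * T_pow p k f m + (-1) * pL_app p (T_pow p k f) m))
    by (intros; ring).
  rewrite dpL_app_lin, dpL_app_pL, IH.
  rewrite (pL_app_ext p _ _ IH); ring.
Qed.

Lemma T_pow_N (p : cpoly) (k : nat) (f : vec) (n : nat) :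
  T_pow p (S k) (Nv f) n
  = RtoC (INR n) * T_pow p (S k) f n - RtoC (INR (S k)) * T_pow p k (dpL_app p f) n.
Proof.
  revert n; induction k as [|k IH]; intros n.
  - simpl; unfold T_app, vsub; rewrite pL_app_N; unfold Nv; simpl; ring.
  - change (T_pow p (S (S k)) (Nv f) n) with (T_app p (T_pow p (S k) (Nv f)) n).
    rewrite (vec_ext (T_pow p (S k) (Nv f)) (fun m => 1 * Nv (T_pow p (S k) f) m
                               + (- RtoC (INR (S k))) * T_pow p k (dpL_app p f) m))
      by (intros; rewrite IH; unfold Nv; ring).
    rewrite T_app_lin; unfold T_app at 1, vsub.
    rewrite pL_app_N, dpL_T_pow; cbn [T_pow]; unfold T_app, vsub, Nv.
    rewrite (S_INR (S k)), RtoC_plus; ring.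
Qed.

Lemma RtoC_INR_S_neq_0 (k : nat) : RtoC (INR (S k)) <> 0.
Proof. intros E; apply RtoC_inj in E; apply (not_0_INR (S k)); [lia | exact E]. Qed.

Lemma log_psum_pL (p : cpoly) (f : vec) :
  log_psum (pLop p) f = vsum1 (fun k => vscal (RtoC (/ INR k)) (T_pow p k f)).
Proof.
  apply functional_extensionality; intros K; unfold log_psum; f_equal.
  apply functional_extensionality; intros k; rewrite app_opow_T; reflexivity.
Qed.

Lemma log_psum_lin (p : cpoly) (a b : C) (f g : vec) (K n : nat) :
  log_psum (pLop p) (fun m => a * f m + b * g m) K n
  = a * log_psum (pLop p) f K n + b * log_psum (pLop p) g K n.
Proof.
  rewrite !log_psum_pL; induction K as [|K IH]; cbn [vsum1]; unfold vzero, vadd, vscal in *; [ring|].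
  rewrite IH, T_pow_lin; ring.
Qed.

Definition geom_psum (p : cpoly) (g : vec) : nat -> vec :=
  vsum1 (fun k => T_pow p (pred k) g).

(* Summing [T_pow_N] with weights 1/k, the factor k cancels: this is why the
   difference is a plain geometric sum in T. *)
Lemma log_psum_N (p : cpoly) (f : vec) (K n : nat) :
  log_psum (pLop p) (Nv f) K n
  = RtoC (INR n) * log_psum (pLop p) f K n - geom_psum p (dpL_app p f) K n.
Proof.
  rewrite !log_psum_pL; unfold geom_psum.
  induction K as [|K IH]; cbn [vsum1]; unfold vzero, vadd, vscal in *; [ring|].
  rewrite IH, T_pow_N, RtoC_inv by (apply not_0_INR; lia).
  change (Nat.pred (S K)) with K; field; apply RtoC_INR_S_neq_0.
Qed.

Lemma pL_geom_psum (p : cpoly) (g : vec) (K n : nat) :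
  pL_app p (geom_psum p g K) n = g n - T_pow p K g n.
Proof.
  revert n; induction K as [|K IH]; intros n; unfold geom_psum in *; simpl.
  - rewrite pL_app_zero; ring.
  - rewrite (pL_app_ext p _ (fun m => 1 * vsum1 (fun k => T_pow p (pred k) g) K m
                                   + 1 * T_pow p K g m)) by (intros; unfold vadd; ring).
    rewrite pL_app_lin, IH; unfold T_app, vsub; ring.
Qed.

(* [ann_poly p c] represents x p'(x) + c p(x); its j-th coefficient is (c + j) a_j. *)
Fixpoint ann_poly (p : cpoly) (c : C) : cpoly :=
  match p with nil => nil | a :: q => (c * a) :: ann_poly q (c + 1) end.

Lemma pL_ann_poly (p : cpoly) (c : C) (f : vec) (n : nat) :
  pL_app (ann_poly p c) f n = dpL_app p f n + c * pL_app p f n.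
Proof.
  revert c n; induction p as [|a q IH]; intros c n; simpl; unfold vzero, vadd, vscal; [ring|].
  rewrite IH; ring.
Qed.

Lemma pL_app_coord_cvg (p : cpoly) (X : nat -> vec) (x : vec) :
  (forall m, cvg_C (fun K => X K m) (x m)) ->
  forall n, cvg_C (fun K => pL_app p (X K) n) (pL_app p x n).
Proof.
  intros H; induction p as [|a q IH]; intros n; [exact (cvg_C_const 0)|].
  apply (cvg_C_ext (fun K => a * X K n + 1 * pL_app q (X K) (S n)));
    [intros; simpl; unfold vadd, vscal; ring|].
  apply cvg_C_lin with (a := x n) (b := pL_app q x (S n)); auto.
  simpl; unfold vadd, vscal; ring.
Qed.

Lemma log_commutator_annihilates (p : cpoly) (c : C) (phi s t : vec) :
  l2_cvg (log_psum (pLop p) phi) s -> l2_cvg (log_psum (pLop p) (Nv phi)) t ->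
  (forall n, t n - RtoC (INR n) * s n = c * phi n) ->
  forall n, pL_app (ann_poly p c) phi n = 0.
Proof.
  intros Hs Ht Hrel.
  set (g := dpL_app p phi).
  assert (Hgeom : forall n, cvg_C (fun K => geom_psum p g K n) (- c * phi n)).
  { intros n.
    apply (cvg_C_ext (fun K => RtoC (INR n) * log_psum (pLop p) phi K n
                               + (-1) * log_psum (pLop p) (Nv phi) K n));
      [intros K; rewrite log_psum_N; fold g; ring|].
    apply cvg_C_lin with (a := s n) (b := t n); try apply l2_cvg_coord; auto.
    replace (- c * phi n) with (- (c * phi n)) by ring; rewrite <- Hrel; ring. }
  assert (Htail : forall n, cvg_C (fun K => T_pow p K g n) 0).
  { intros n.
    apply (cvg_C_ext (fun K => 1 * geom_psum p g (S K) n + (-1) * geom_psum p g K n));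
      [intros K; unfold geom_psum; cbn [vsum1]; unfold vadd; simpl; ring|].
    apply cvg_C_lin with (a := - c * phi n) (b := - c * phi n);
      [apply (proj2 (cvg_C_shift (fun K => geom_psum p g K n) _)); auto | auto | ring]. }
  assert (Hrec : forall n, pL_app p (fun m => - c * phi m) n = g n).
  { intros n; apply (cvg_C_unique (fun K => pL_app p (geom_psum p g K) n)).
    - apply pL_app_coord_cvg; auto.
    - apply (cvg_C_ext (fun K => 1 * g n + (-1) * T_pow p K g n));
        [intros; rewrite pL_geom_psum; ring|].
      apply cvg_C_lin with (a := g n) (b := RtoC 0); [apply cvg_C_const | auto | ring]. }
  intros n; rewrite pL_ann_poly; fold g; rewrite <- Hrec.
  rewrite (pL_app_ext p (fun m => - c * phi m) (fun m => - c * phi m + 0 * phi m)) by (intros; ring).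
  rewrite pL_app_lin; ring.
Qed.

Definition is_monomial (p : cpoly) : Prop :=
  exists (b : C) (m : nat), forall x : C, peval p x = b * Cpow x m.

Lemma peval_zero_of_ann_poly_zero (p : cpoly) (c : C) :
  (forall j : nat, c + RtoC (INR j) <> 0) ->
  List.Forall (fun x : C => x = 0) (ann_poly p c) -> forall x, peval p x = 0.
Proof.
  revert c; induction p as [|a q IH]; intros c Hc Hz x; simpl; auto.
  inversion Hz as [|? ? Ha Hq]; subst.
  destruct (Cmult_integral _ _ Ha) as [Hc0 | ->].
  - exfalso; apply (Hc 0%nat); rewrite Hc0; simpl; ring.
  - rewrite (IH (c + 1)); auto; [ring|].
    intros j; replace (c + 1 + RtoC (INR j)) with (c + RtoC (INR (S j)))
      by (rewrite S_INR, RtoC_plus; ring).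
    apply Hc.
Qed.

(* The coefficients (c + j) a_j all vanish only if at most one a_j is nonzero. *)
Lemma monomial_of_ann_poly_zero (p : cpoly) (c : C) :
  List.Forall (fun x : C => x = 0) (ann_poly p c) -> is_monomial p.
Proof.
  revert c; induction p as [|a q IH]; intros c Hz; [exists 0, 0%nat; intros; simpl; ring|].
  inversion Hz as [|? ? Ha Hq]; subst.
  destruct (Cmult_integral _ _ Ha) as [-> | ->].
  - exists a, 0%nat; intros x; simpl.
    rewrite (peval_zero_of_ann_poly_zero q (0 + 1)); auto; [ring|].
    intros j E; apply (f_equal fst) in E; simpl in E.
    pose proof (pos_INR j); lra.
  - destruct (IH _ Hq) as (b & m & Hm).
    exists b, (S m); intros x; simpl; rewrite Hm; ring.
Qed.

Lemma last_nonzero_split (q : list C) :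
  List.Exists (fun x : C => x <> 0) q ->
  exists r b zs, q = r ++ b :: zs /\ b <> 0 /\ List.Forall (fun x : C => x = 0) zs.
Proof.
  induction q as [|a q IH]; intros H; [inversion H|].
  destruct (classic (List.Exists (fun x : C => x <> 0) q)) as [Hq | Hq].
  - destruct (IH Hq) as (r & b & zs & -> & Hb & Hzs).
    exists (a :: r), b, zs; auto.
  - apply Exists_cons in H; destruct H as [Ha | Hq']; [|contradiction].
    exists nil, a, q; repeat split; auto.
    apply Forall_Exists_neg in Hq; eapply Forall_impl; [|exact Hq].
    intros x Hx; apply NNPP; auto.
Qed.

Lemma pL_app_app (r s : cpoly) (f : vec) (n : nat) :
  pL_app (r ++ s) f n = pL_app r f n + pL_app s f (n + length r)%nat.
Proof.
  revert n; induction r as [|x r IH]; intros n; simpl; unfold vzero, vadd, vscal.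
  - rewrite Nat.add_0_r; ring.
  - rewrite IH; replace (S n + length r)%nat with (n + S (length r))%nat by lia; ring.
Qed.

Lemma pL_app_zeros (zs : cpoly) (f : vec) (n : nat) :
  List.Forall (fun x : C => x = 0) zs -> pL_app zs f n = 0.
Proof.
  intros H; revert n; induction H as [|x zs Hx _ IH]; intros n; simpl; unfold vzero, vadd, vscal; auto.
  rewrite IH, Hx; ring.
Qed.

Lemma pL_app_vanish (r : cpoly) (f : vec) (n : nat) :
  (forall j, (j < length r)%nat -> f (n + j)%nat = 0) -> pL_app r f n = 0.
Proof.
  revert n; induction r as [|x r IH]; intros n H; simpl; unfold vzero, vadd, vscal; auto.
  rewrite IH.
  - replace (f n) with (f (n + 0)%nat) by (f_equal; lia); rewrite H by (simpl; lia); ring.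
  - intros j Hj; replace (S n + j)%nat with (n + S j)%nat by lia; apply H; simpl; lia.
Qed.

(* With b the last nonzero coefficient, q(L) f = 0 is a recurrence expressing
   b f (m) through f (m - length r), ..., f (m - 1). *)
Lemma eq_vzero_of_recurrence (r : cpoly) (b : C) (zs : cpoly) (f : vec) :
  b <> 0 -> List.Forall (fun x : C => x = 0) zs ->
  (forall n, pL_app (r ++ b :: zs) f n = 0) ->
  (forall i, (i < length r)%nat -> f i = 0) -> f = vzero.
Proof.
  intros Hb Hzs Hrec Hpre; apply vec_ext; intros m; unfold vzero.
  induction m as [m IHm] using (well_founded_induction Wf_nat.lt_wf).
  destruct (Nat.lt_ge_cases m (length r)) as [Hm | Hm]; auto.
  pose proof (Hrec (m - length r)%nat) as E.
  rewrite pL_app_app in E; simpl in E; unfold vadd, vscal in E.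
  rewrite pL_app_vanish, pL_app_zeros in E by (auto; intros j Hj; apply IHm; lia).
  replace (m - length r + length r)%nat with m in E by lia.
  destruct (Cmult_integral b (f m)) as [|]; [rewrite <- E; ring | contradiction | auto].
Qed.

Lemma finite_dim_of_prefix_injective (n : nat) (D : vec -> Prop) :
  (forall f g, D f -> D g -> D (vadd f g)) -> (forall a f, D f -> D (vscal a f)) ->
  (forall f, D f -> (forall i, (i < n)%nat -> f i = 0) -> f = vzero) -> finite_dim D.
Proof.
  revert D; induction n as [|n IH]; intros D Hadd Hscal Hinj.
  - exists nil; intros f Hf; exists nil; split; [constructor|].
    simpl; apply Hinj; auto; intros; lia.
  - destruct (IH (fun f => D f /\ f n = 0)) as [l Hl].
    + intros f g [Hf Hf0] [Hg Hg0]; split; auto; unfold vadd; rewrite Hf0, Hg0; ring.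
    + intros a f [Hf Hf0]; split; auto; unfold vscal; rewrite Hf0; ring.
    + intros f [Hf Hf0] Hpre; apply Hinj; auto.
      intros i Hi; destruct (Nat.eq_dec i n) as [->|]; auto; apply Hpre; lia.
    + destruct (classic (exists h, D h /\ h n <> 0)) as [(h & Hh & Hhn) | Hnone].
      * exists (h :: l); intros f Hf.
        set (a := f n / h n).
        destruct (Hl (vadd f (vscal (- a) h))) as (ls & Hls & Els).
        { split; [apply Hadd; auto | unfold vadd, vscal, a; field; auto]. }
        exists ((a, h) :: ls); split.
        -- constructor; [simpl; auto|].
           eapply Forall_impl; [|exact Hls]; intros x Hx; simpl; auto.
        -- simpl; rewrite <- Els; apply vec_ext; intros m; unfold vadd, vscal; ring.
      * exists l; intros f Hf; apply Hl; split; auto.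
        apply NNPP; intros Hfn; apply Hnone; exists f; auto.
Qed.

Lemma finite_dim_of_log_commutator (p : cpoly) (c : C) (D : vec -> Prop) :
  ~ is_monomial p -> is_subspace D ->
  (forall phi, D phi ->
     dom (ocomp Nop (logop (pLop p))) phi /\ dom (ocomp (logop (pLop p)) Nop) phi) ->
  comm_on Nop (logop (pLop p)) (oscal c Iop) D -> finite_dim D.
Proof.
  intros Hmono (_ & Hadd & Hscal) Hdom Hcomm.
  assert (Hann : forall phi, D phi -> forall n, pL_app (ann_poly p c) phi n = 0).
  { intros phi Hphi.
    destruct (Hdom phi Hphi) as [[[_ [s Hs]] _] [_ [_ [t Ht]]]].
    destruct (Hcomm phi Hphi) as (_ & _ & Heq).
    change (l2_cvg (log_psum (pLop p) (Nv phi)) t) in Ht.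
    change (vsub (Nv (vscal (-1) (lim_l2 (log_psum (pLop p) phi))))
                 (vscal (-1) (lim_l2 (log_psum (pLop p) (Nv phi)))) = vscal c phi) in Heq.
    rewrite (lim_l2_eq _ _ Hs), (lim_l2_eq _ _ Ht) in Heq.
    apply (log_commutator_annihilates p c phi s t Hs Ht).
    intros n; apply (f_equal (fun f => f n)) in Heq.
    unfold vsub, vscal, Nv in Heq; rewrite <- Heq; ring. }
  destruct (classic (List.Exists (fun x : C => x <> 0) (ann_poly p c))) as [Hnz | Hz].
  - destruct (last_nonzero_split _ Hnz) as (r & b & zs & Hq & Hb & Hzs).
    apply (finite_dim_of_prefix_injective (length r) D Hadd Hscal).
    intros f Hf Hpre; apply (eq_vzero_of_recurrence r b zs f Hb Hzs); auto.
    rewrite <- Hq; apply Hann; auto.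
  - exfalso; apply Hmono, (monomial_of_ann_poly_zero p c).
    apply Forall_Exists_neg in Hz; eapply Forall_impl; [|exact Hz].
    intros x Hx; apply NNPP; auto.
Qed.

Fixpoint csum1 (F : nat -> C) (K : nat) : C :=
  match K with O => 0 | S K' => csum1 F K' + F K end.

Lemma csum1_sum_n (F : nat -> C) (K : nat) : csum1 F (S K) = sum_n (fun k => F (S k)) K.
Proof.
  induction K as [|K IH]; [simpl; rewrite sum_O; ring|].
  rewrite sum_Sn, <- IH; reflexivity.
Qed.

Lemma cvg_C_series (G : nat -> C) (B : nat -> R) :
  (forall k, Cmod (G k) <= B k)%R -> ex_series B -> exists L, cvg_C (sum_n G) L.
Proof.
  intros HB EB.
  destruct (@ex_series_le C_AbsRing C_CompleteNormedModule G B HB EB) as [L HL].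
  exists L; apply cvg_C_of_filterlim; exact HL.
Qed.

Lemma cvg_C_log_series (z : C) :
  (Cmod z < 1)%R -> exists L, cvg_C (csum1 (fun k => RtoC (/ INR k) * Cpow z k)) L.
Proof.
  intros Hz.
  destruct (cvg_C_series (fun k => RtoC (/ INR (S k)) * Cpow z (S k)) (fun k => Cmod z ^ S k)%R)
    as [L HL].
  - intros k; rewrite Cmod_mult, Cmod_R, Cmod_pow.
    assert (Hk : (1 <= INR (S k))%R) by (apply (le_INR 1); lia).
    assert (Rabs (/ INR (S k)) <= 1)%R.
    { rewrite Rabs_pos_eq by (left; apply Rinv_0_lt_compat; lra).
      rewrite <- Rinv_1; apply Rinv_le_contravar; lra. }
    pose proof (pow_le (Cmod z) (S k) (Cmod_ge_0 z)); pose proof (Rabs_pos (/ INR (S k))); nra.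
  - apply (ex_series_ext (fun k => scal (Cmod z) (Cmod z ^ k)%R)); [reflexivity|].
    apply (ex_series_scal_l (V := R_NormedModule)), ex_series_geom.
    rewrite Rabs_pos_eq; auto; apply Cmod_ge_0.
  - exists L; apply (proj1 (cvg_C_shift _ _)).
    exact (cvg_C_ext _ _ _ (fun K => eq_sym (csum1_sum_n _ K)) HL).
Qed.

Lemma cvg_C_geom_series (z : C) :
  (Cmod z < 1)%R -> cvg_C (csum1 (fun k => Cpow z (pred k))) (/ (1 - z)).
Proof.
  intros Hz.
  assert (Hz1 : 1 - z <> 0).
  { intros E; replace z with (1 - (1 - z)) in Hz by ring; rewrite E in Hz.
    replace (1 - 0) with (RtoC 1) in Hz by ring; rewrite Cmod_1 in Hz; lra. }
  assert (Htel : forall K, csum1 (fun k => Cpow z (pred k)) K * (1 - z) = 1 - Cpow z K).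
  { induction K as [|K IH]; simpl; [ring|].
    rewrite Cmult_plus_distr_r, IH; ring. }
  apply (cvg_C_ext (fun K => (- / (1 - z)) * Cpow z K + / (1 - z) * 1)).
  - intros K; transitivity ((1 - Cpow z K) / (1 - z)); [field; auto|].
    rewrite <- (Htel K); field; auto.
  - apply cvg_C_lin with (a := RtoC 0) (b := RtoC 1);
      [apply cvg_C_pow; auto | apply cvg_C_const | ring].
Qed.

Section Eigenvector.

Variables (alpha : C) (phi : vec).
Hypothesis eigen : forall n, phi (S n) = alpha * phi n.

Lemma pL_app_eigen (p : cpoly) (n : nat) : pL_app p phi n = peval p alpha * phi n.
Proof.
  revert n; induction p as [|a q IH]; intros n; simpl; unfold vzero, vadd, vscal; [ring|].
  rewrite IH, eigen; ring.
Qed.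

Lemma dpL_app_eigen (p : cpoly) (n : nat) : dpL_app p phi n = alpha * pdeval p alpha * phi n.
Proof.
  revert n; induction p as [|a q IH]; intros n; simpl; [unfold vzero; ring|].
  rewrite IH, pL_app_eigen, eigen; ring.
Qed.

Lemma T_pow_eigen (p : cpoly) (k n : nat) :
  T_pow p k phi n = Cpow (1 - peval p alpha) k * phi n.
Proof.
  revert n; induction k as [|k IH]; intros n; simpl; [ring|].
  unfold T_app, vsub.
  rewrite (pL_app_ext p (T_pow p k phi)
             (fun m => Cpow (1 - peval p alpha) k * phi m + 0 * phi m)) by (intros; rewrite IH; ring).
  rewrite pL_app_lin, pL_app_eigen, IH; ring.
Qed.

Lemma log_psum_eigen (p : cpoly) (K n : nat) :
  log_psum (pLop p) phi K n
  = csum1 (fun k => RtoC (/ INR k) * Cpow (1 - peval p alpha) k) K * phi n.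
Proof.
  rewrite log_psum_pL; induction K as [|K IH]; cbn [vsum1 csum1];
    unfold vzero, vadd, vscal in *; [ring|].
  rewrite IH, T_pow_eigen; ring.
Qed.

Lemma geom_psum_eigen (p : cpoly) (K n : nat) :
  geom_psum p phi K n = csum1 (fun k => Cpow (1 - peval p alpha) (pred k)) K * phi n.
Proof.
  unfold geom_psum; induction K as [|K IH]; cbn [vsum1 csum1]; unfold vzero, vadd in *; [ring|].
  rewrite IH, T_pow_eigen; ring.
Qed.

End Eigenvector.

(* [a] and [b] are minus log p(L) f and minus log p(L) N f, so the last clause
   says [N, log p(L)] f = c f. *)
Definition log_comm_rel (p : cpoly) (c : C) (f : vec) : Prop :=
  in_l2 f /\ in_l2 (Nv f) /\
  exists a b, l2_cvg (log_psum (pLop p) f) a /\ l2_cvg (log_psum (pLop p) (Nv f)) b /\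
    in_l2 (Nv a) /\ forall n, b n - RtoC (INR n) * a n = c * f n.

Lemma l2_cvg_const (f : vec) : in_l2 f -> l2_cvg (fun _ => f) f.
Proof.
  intros Hf.
  pose proof (l2_cvg_scal (fun _ => 1) 1 f Hf (cvg_C_const 1)) as H; cbv beta in H.
  rewrite (vec_ext (vscal 1 f) f) in H by (intros; unfold vscal; ring); exact H.
Qed.

Lemma log_comm_rel_zero (p : cpoly) (c : C) : log_comm_rel p c vzero.
Proof.
  assert (HN : Nv vzero = vzero) by (apply vec_ext; intros; unfold Nv, vzero; ring).
  assert (Hlog : log_psum (pLop p) vzero = fun _ => vzero).
  { apply functional_extensionality; intros K; apply vec_ext; intros n.
    rewrite (vec_ext vzero (fun m => 0 * vzero m + 0 * vzero m)) at 1 by (intros; unfold vzero; ring).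
    rewrite log_psum_lin; unfold vzero; ring. }
  unfold log_comm_rel; rewrite HN, Hlog.
  split; [apply in_l2_zero|]; split; [apply in_l2_zero|].
  exists vzero, vzero; rewrite HN.
  pose proof (l2_cvg_const vzero in_l2_zero) as H0.
  split; [|split; [|split]]; auto; [apply in_l2_zero | intros; unfold vzero; ring].
Qed.

Lemma log_comm_rel_lin (p : cpoly) (c x y : C) (f g : vec) :
  log_comm_rel p c f -> log_comm_rel p c g -> log_comm_rel p c (fun m => x * f m + y * g m).
Proof.
  intros (Hf & HNf & a & b & Ha & Hb & HNa & Hab) (Hg & HNg & a' & b' & Ha' & Hb' & HNa' & Hab').
  unfold log_comm_rel; rewrite Nv_lin.
  split; [|split]; [apply in_l2_lin; auto | apply in_l2_lin; auto |].
  exists (fun n => x * a n + y * a' n), (fun n => x * b n + y * b' n).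
  split; [|split; [|split]].
  - rewrite (functional_extensionality (log_psum (pLop p) (fun m => x * f m + y * g m))
               (fun K n => x * log_psum (pLop p) f K n + y * log_psum (pLop p) g K n))
      by (intros K; apply vec_ext; intros n; apply log_psum_lin).
    apply l2_cvg_lin; auto.
  - rewrite (functional_extensionality (log_psum (pLop p) (fun m => x * Nv f m + y * Nv g m))
               (fun K n => x * log_psum (pLop p) (Nv f) K n + y * log_psum (pLop p) (Nv g) K n))
      by (intros K; apply vec_ext; intros n; apply log_psum_lin).
    apply l2_cvg_lin; auto.
  - rewrite Nv_lin; apply in_l2_lin; auto.
  - intros n; transitivity (x * (b n - RtoC (INR n) * a n) + y * (b' n - RtoC (INR n) * a' n));
      [ring | rewrite Hab, Hab'; ring].
Qed.

Lemma log_comm_rel_eigen (p : cpoly) (c alpha : C) (phi : vec) :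
  in_l2 phi -> in_l2 (Nv phi) ->
  (Cmod (peval p alpha - 1) < 1)%R -> alpha * pdeval p alpha + c * peval p alpha = 0 ->
  (forall n, phi (S n) = alpha * phi n) -> log_comm_rel p c phi.
Proof.
  intros Hphi HNphi Hm Heq Heig.
  set (P := peval p alpha) in *; set (z := 1 - P).
  set (beta := alpha * pdeval p alpha).
  assert (Hz : (Cmod z < 1)%R)
    by (unfold z; replace (1 - P) with (- (P - 1)) by ring; rewrite Cmod_opp; auto).
  assert (HP : P <> 0).
  { intros E; rewrite E in Hm; replace (0 - 1) with (- (1)) in Hm by ring.
    rewrite Cmod_opp, Cmod_1 in Hm; lra. }
  set (sK := csum1 (fun k => RtoC (/ INR k) * Cpow z k)).
  set (tK := csum1 (fun k => Cpow z (pred k))).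
  assert (Hlog : log_psum (pLop p) phi = fun K => vscal (sK K) phi).
  { apply functional_extensionality; intros K; apply vec_ext; intros n.
    apply (log_psum_eigen alpha phi Heig). }
  assert (HlogN : log_psum (pLop p) (Nv phi)
                  = fun K n => 1 * vscal (sK K) (Nv phi) n + (- beta) * vscal (tK K) phi n).
  { apply functional_extensionality; intros K; apply vec_ext; intros n.
    rewrite log_psum_N, (log_psum_eigen alpha phi Heig).
    rewrite (vec_ext (dpL_app p phi) (fun m => beta * phi m))
      by (intros; apply (dpL_app_eigen alpha phi Heig)).
    rewrite (geom_psum_eigen alpha (fun m => beta * phi m)) by (intros; rewrite Heig; ring).
    unfold vscal, Nv; fold P z sK tK; ring. }
  destruct (cvg_C_log_series z Hz) as [sL HsL].
  split; [|split]; auto.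
  exists (vscal sL phi), (fun n => 1 * vscal sL (Nv phi) n + (- beta) * vscal (/ (1 - z)) phi n).
  rewrite Hlog, HlogN; split; [|split; [|split]].
  - apply l2_cvg_scal; auto.
  - apply l2_cvg_lin; apply l2_cvg_scal; auto; apply cvg_C_geom_series; auto.
  - apply (in_l2_ext (vscal sL (Nv phi))); [intros; unfold vscal, Nv; ring | apply in_l2_scal; auto].
  - intros n; unfold vscal, Nv, z.
    replace beta with (- c * P) by (unfold beta; rewrite <- (Cplus_0_l (- c * P)), <- Heq; ring).
    replace (1 - (1 - P)) with P by ring; field; auto.
Qed.

Lemma log_comm_rel_Dpc (p : cpoly) (c : C) (f : vec) : Dpc p c f -> log_comm_rel p c f.
Proof.
  intros (l & Hl & ->); induction l as [|[a g] l IH]; [apply log_comm_rel_zero|].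
  inversion Hl as [|? ? Hg Hrest]; subst.
  rewrite (vec_ext (lincomb ((a, g) :: l)) (fun m => a * g m + 1 * lincomb l m))
    by (intros; simpl; unfold vadd, vscal; ring).
  apply log_comm_rel_lin; [|apply IH; auto].
  destruct Hg as [[Hg HNg] (alpha & Hm & Heq & _ & Heig)].
  apply (log_comm_rel_eigen p c alpha g); auto.
  intros n; exact (f_equal (fun h => h n) Heig).
Qed.

Lemma dom_opow_pL (p : cpoly) (k : nat) (f : vec) : in_l2 f -> dom (opow (pLop p) k) f.
Proof.
  intros Hf.
  assert (H : dom (opow (pLop p) k) f /\ in_l2 (Defs.app (opow (pLop p) k) f)).
  { induction k as [|k [Hdom Hl2]]; simpl; auto.
    split; [split|]; auto; apply in_l2_pL_app; auto. }
  apply H.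
Qed.

Lemma comm_on_Dpc (p : cpoly) (c : C) :
  c <> 0 -> comm_on Nop (oscal (- (Ci / c)) (logop (pLop p))) (oscal (- Ci) Iop) (Dpc p c).
Proof.
  intros hc f Hf.
  destruct (log_comm_rel_Dpc p c f Hf) as (Hf2 & HNf & a & b & Ha & Hb & HNa & Hab).
  set (k := - (Ci / c)).
  assert (Hlog : lim_l2 (log_psum (pLop p) f) = a) by (apply lim_l2_eq; auto).
  assert (HlogN : lim_l2 (log_psum (pLop p) (Nv f)) = b) by (apply lim_l2_eq; auto).
  split; [|split].
  - split; [split; [intros; apply dom_opow_pL; auto | exists a; auto]|].
    change (dom Nop (vscal k (vscal (-1) (lim_l2 (log_psum (pLop p) f))))).
    rewrite Hlog; split; [apply in_l2_scal, in_l2_scal; apply Ha|].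
    apply (in_l2_ext (vscal (k * -1) (Nv a)));
      [intros; unfold vscal, Nv; ring | apply in_l2_scal; auto].
  - split; [split; auto|]; split; [intros; apply dom_opow_pL; auto | exists b; auto].
  - change (vsub (Nv (vscal k (vscal (-1) (lim_l2 (log_psum (pLop p) f)))))
                 (vscal k (vscal (-1) (lim_l2 (log_psum (pLop p) (Nv f)))))
            = vscal (- Ci) f).
    rewrite Hlog, HlogN; apply vec_ext; intros n; unfold vsub, vscal, Nv.
    transitivity (k * (b n - RtoC (INR n) * a n)); [ring|].
    rewrite Hab; unfold k; field; auto.
Qed.

Lemma ex_series_sq_mul_geom (rho : R) :
  (0 < rho < 1)%R -> ex_series (fun n => INR (S n) ^ 2 * rho ^ n)%R.
Proof.
  intros Hrho.
  set (a := fun n => (INR (S n) ^ 2 * rho ^ n)%R).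
  assert (Ha : forall n, (0 < a n)%R)
    by (intros n; apply Rmult_lt_0_compat; apply pow_lt; [apply lt_0_INR; lia | lra]).
  apply (ex_series_ext (fun n => Rabs (a n))); [intros n; apply Rabs_pos_eq, Rlt_le, Ha|].
  apply (ex_series_DAlembert a rho); [lra | intros n; pose proof (Ha n); lra|].
  assert (Hinv : is_lim_seq (fun n => / INR (S n))%R 0%R).
  { apply (is_lim_seq_incr_1 (fun n => / INR n)%R).
    exact (is_lim_seq_inv _ _ is_lim_seq_INR ltac:(discriminate)). }
  apply (is_lim_seq_ext (fun n => (1 + / INR (S n)) * ((1 + / INR (S n)) * 1) * rho)%R).
  - intros n; pose proof (Ha n); pose proof (Ha (S n)).
    rewrite Rabs_pos_eq by (apply Rlt_le, Rdiv_lt_0_compat; auto).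
    unfold a; rewrite (S_INR (S n)).
    assert (INR (S n) <> 0)%R by (apply not_0_INR; lia).
    assert (rho ^ n <> 0)%R by (apply pow_nonzero; lra).
    change (rho ^ S n)%R with (rho * rho ^ n)%R; field; auto.
  - replace (Finite rho) with (Finite ((1 + 0) * ((1 + 0) * 1) * rho)%R) by (f_equal; ring).
    repeat apply is_lim_seq_mult' || apply is_lim_seq_plus'; auto; apply is_lim_seq_const.
Qed.

Lemma geom_vec_dom_N (alpha : C) :
  (Cmod alpha < 1)%R -> in_l2 (fun n => Cpow alpha n) /\ in_l2 (Nv (fun n => Cpow alpha n)).
Proof.
  intros Ha; set (r := (Cmod alpha ^ 2)%R).
  assert (Hr : (0 <= r < 1)%R) by (unfold r; pose proof (Cmod_ge_0 alpha); simpl; nra).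
  assert (Hsq : forall n, (Cmod (Cpow alpha n) ^ 2 = r ^ n)%R)
    by (intros n; rewrite Cmod_pow; unfold r; rewrite <- !pow_mult, Nat.mul_comm; reflexivity).
  split.
  - apply (ex_series_ext (fun n => r ^ n)%R); [intros; rewrite Hsq; auto|].
    apply ex_series_geom; rewrite Rabs_pos_eq; lra.
  - set (rho := ((1 + r) / 2)%R).
    apply (@ex_series_le R_AbsRing R_CompleteNormedModule _ (fun n => INR (S n) ^ 2 * rho ^ n)%R);
      [|apply ex_series_sq_mul_geom; unfold rho; lra].
    intros n; change norm with Rabs; unfold Nv.
    rewrite Rabs_pos_eq by apply pow2_ge_0.
    rewrite Cmod_mult, Cmod_R, Rabs_pos_eq by apply pos_INR.
    rewrite Rpow_mult_distr, Hsq.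
    apply Rmult_le_compat; try (apply pow_le; lra); [apply pow_le, pos_INR | |].
    + apply pow_incr; split; [apply pos_INR | rewrite S_INR; lra].
    + apply pow_incr; unfold rho; lra.
Qed.

Lemma Dpc_nontrivial (p : cpoly) (c alpha : C) :
  (Cmod alpha < 1)%R -> alpha * pdeval p alpha + c * peval p alpha = 0 ->
  (Cmod (peval p alpha - 1) < 1)%R -> exists phi, Dpc p c phi /\ phi <> vzero.
Proof.
  intros Ha Heq Hm; destruct (geom_vec_dom_N alpha Ha) as [Hl2 HNl2].
  set (phi := fun n => Cpow alpha n).
  exists (lincomb ((RtoC 1, phi) :: nil)); split.
  - exists ((RtoC 1, phi) :: nil); split; auto.
    constructor; [|constructor]; simpl.
    split; [split; auto|]; exists alpha; repeat split; auto.
  - intros E; apply (f_equal (fun f => f 0%nat)) in E.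
    simpl in E; unfold vadd, vscal, vzero, phi in E; simpl in E.
    apply (f_equal fst) in E; simpl in E; lra.
Qed.

Theorem mainTheorem8 (p : cpoly) (c : C) (hc : c <> 0) :
  ((exists alpha : C, (Cmod alpha < 1)%R /\
       alpha * pdeval p alpha + c * peval p alpha = 0 /\
       (Cmod (peval p alpha - 1) < 1)%R) ->
     (exists phi, Dpc p c phi /\ phi <> vzero) /\
     comm_on Nop (oscal (- (Ci / c)) (logop (pLop p))) (oscal (- Ci) Iop) (Dpc p c))
  /\
  ((~ exists (b : C) (m : nat), forall x : C, peval p x = b * Cpow x m) ->
     forall D : vec -> Prop,
       is_subspace D ->
       (forall phi, D phi ->
          Eset p phi /\ dom (ocomp Nop (logop (pLop p))) phi /\
          dom (ocomp (logop (pLop p)) Nop) phi) ->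
       comm_on Nop (logop (pLop p)) (oscal c Iop) D ->
       finite_dim D).
Proof.
  split.
  - intros (alpha & Ha & Heq & Hm).
    split; [exact (Dpc_nontrivial p c alpha Ha Heq Hm) | exact (comm_on_Dpc p c hc)].
  -
    intros Hmono D HD Hdom.
    apply (finite_dim_of_log_commutator p c D Hmono HD).
    intros phi Hphi; apply Hdom, Hphi.
Qed.
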